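(* Let $\gamma\in\mathbb{R}$ and $|a|$ small. The $L^2_0(\mathbb{T})$-spectrum of $\mathcal H_a(\gamma)$ is symmetric with respect to reflection through the imaginary axis: if $\mu$ is an eigenvalue of $\mathcal H_a(\gamma)$ then so is $-\overline{\mu}$.
   Context: Here $\rho,\phi\in\mathbb{R}$, $k>0$, and $w$, $c$ describe the small-amplitude periodic traveling wave of the Konopelchenko–Dubrovsky equation: $w$ is smooth, real, even and $2\pi$-periodic, $w(z)=a\cos z+a^2(A_0+A_2\cos 2z)+a^3A_3\cos 3z+O(a^4)$, $c=k^2+a^2c_2+O(a^4)$, with $A_0=-\frac{3\rho}{2k^2}$, $A_2=\frac{\rho}{2k^2}$, $A_3=-\frac{\phi^2}{64k^2}+\frac{3\rho^2}{16k^4}$, $c_2=\frac{3\phi^2}{8}+\frac{15\rho^2}{2k^2}$. The operator $\mathcal H_a(\gamma)=ck\partial_z+k^3\partial_z^3+6k\rho\,\partial_z(w\,\cdot)-\tfrac32\phi^2k\,\partial_z(w^2\,\cdot)-\frac{3\gamma^2}{k}\partial_z^{-1}-3i\phi\gamma\, w_z\,\partial_z^{-1}$ acts in $L^2_0(\mathbb{T})$ (mean-zero $2\pi$-periodic square-integrable functions) with domain $H^3(\mathbb{T})\cap L^2_0(\mathbb{T})$. *)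

From Stdlib Require Import Reals ZArith.
From Coquelicot Require Import Coquelicot.
Open Scope R_scope.

Definition A0 (rho k : R) : R := - (3 * rho) / (2 * k ^ 2).
Definition A2 (rho k : R) : R := rho / (2 * k ^ 2).
Definition A3 (rho phi k : R) : R := - (phi ^ 2) / (64 * k ^ 2) + 3 * rho ^ 2 / (16 * k ^ 4).
Definition c2 (rho phi k : R) : R := 3 * phi ^ 2 / 8 + 15 * rho ^ 2 / (2 * k ^ 2).

(* Fourier coefficient  f^(m) = (1/2pi) int_0^{2pi} f(z) e^{-imz} dz
   of a real 2pi-periodic function f, as a complex number. *)
Definition fcoef (f : R -> R) (m : Z) : C :=
  (/ (2 * PI) * RInt (fun z => f z * cos (IZR m * z)) 0 (2 * PI),
   - (/ (2 * PI) * RInt (fun z => f z * sin (IZR m * z)) 0 (2 * PI))).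

(* Sums over Z (symmetric partial sums; all sums used below are absolutely
   convergent, so this is the usual sum over Z). *)
Definition zsym (f : Z -> C) (n : nat) : C :=
  match n with
  | O => f 0%Z
  | S _ => Cplus (f (Z.of_nat n)) (f (- Z.of_nat n)%Z)
  end.
Definition is_zseries (f : Z -> C) (l : C) : Prop := is_series (zsym f) l.

(* A function u in L^2_0(T) is represented by its Fourier coefficients
   u : Z -> C.  Membership in H^3(T) /\ L^2_0(T): *)
Definition in_H3_L20 (u : Z -> C) : Prop :=
  u 0%Z = RtoC 0 /\
  ex_series (fun n : nat =>
    INR n ^ 6 * (Cmod (u (Z.of_nat n)) ^ 2 + Cmod (u (- Z.of_nat n)%Z) ^ 2)).

(* The Fourier symbol  i n  of d/dz. *)
Definition dsym (n : Z) : C := Cmult Ci (RtoC (IZR n)).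

(* d_z^{-1} on L^2_0: the mean-zero antiderivative. *)
Definition dinv (u : Z -> C) (n : Z) : C :=
  if Z.eqb n 0 then RtoC 0 else Cmult (u n) (Cinv (dsym n)).

(* mu is an eigenvalue of
   H = c k d_z + k^3 d_z^3 + 6 k rho d_z(w .) - 3/2 phi^2 k d_z(w^2 .)
       - (3 gamma^2 / k) d_z^{-1} - 3 i phi gamma w_z d_z^{-1}
   on L^2_0(T) with domain H^3(T) /\ L^2_0(T): there is a nonzero u in the
   domain with H u = mu u (equality of all Fourier coefficients).
   v1, v2, v3 are the Fourier coefficients of w u, w^2 u, w_z d_z^{-1} u
   (discrete convolutions). *)
Definition is_eigenvalue_H (k c rho phi gamma : R) (w : R -> R) (mu : C) : Prop :=
  exists u : Z -> C,
    in_H3_L20 u /\ (exists n, u n <> RtoC 0) /\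
    exists v1 v2 v3 : Z -> C,
      (forall n, is_zseries (fun m => Cmult (fcoef w (n - m)%Z) (u m)) (v1 n)) /\
      (forall n, is_zseries
         (fun m => Cmult (fcoef (fun z => w z ^ 2) (n - m)%Z) (u m)) (v2 n)) /\
      (forall n, is_zseries
         (fun m => Cmult (fcoef (Derive w) (n - m)%Z) (dinv u m)) (v3 n)) /\
      (forall n : Z,
        Cplus (Cmult (RtoC (c * k)) (Cmult (dsym n) (u n)))
       (Cplus (Cmult (RtoC (k ^ 3)) (Cmult (Cmult (dsym n) (Cmult (dsym n) (dsym n))) (u n)))
       (Cplus (Cmult (RtoC (6 * k * rho)) (Cmult (dsym n) (v1 n)))
       (Cplus (Cmult (RtoC (- (3 / 2) * phi ^ 2 * k)) (Cmult (dsym n) (v2 n)))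
       (Cplus (Cmult (RtoC (- (3 * gamma ^ 2 / k))) (dinv u n))
              (Cmult (Cmult (RtoC (- 3 * phi * gamma)) Ci) (v3 n))))))
        = Cmult mu (u n)).

(* Conjugating Fourier coefficients, u_n |-> conj(u_n), is the map
   u(z) |-> conj(u(-z)).  Since w is real and even, the Fourier coefficients
   of w and w^2 are real and those of w_z purely imaginary; the symbols i n of
   d_z and 1/(i n) of d_z^{-1} are purely imaginary as well.  Conjugating the
   eigenvalue equation H u = mu u coefficientwise therefore gives
   H conj(u) = - conj(mu) conj(u). *)
From Stdlib Require Import Reals ZArith Lra.
From Coquelicot Require Import Coquelicot.
Open Scope R_scope.

Lemma Cconj_RtoC (r : R) : Cconj (RtoC r) = RtoC r.
Proof. unfold Cconj, RtoC; simpl; f_equal; ring. Qed.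

Lemma Cconj_Ci : Cconj Ci = Copp Ci.
Proof. unfold Cconj, Ci, Copp; simpl; f_equal; ring. Qed.

Lemma Cconj_dsym (n : Z) : Cconj (dsym n) = Copp (dsym n).
Proof. unfold Cconj, dsym, Ci, Copp, Cmult, RtoC; simpl; f_equal; ring. Qed.

Lemma Cconj_Cinv_dsym (n : Z) : Cconj (Cinv (dsym n)) = Copp (Cinv (dsym n)).
Proof.
  unfold Cconj, dsym, Ci, Copp, Cmult, Cinv, RtoC; simpl; f_equal.
  replace (0 * IZR n - 1 * 0) with 0 by ring. unfold Rdiv. ring.
Qed.

Lemma dinv_Cconj (u : Z -> C) (n : Z) :
  dinv (fun m => Cconj (u m)) n = Copp (Cconj (dinv u n)).
Proof.
  unfold dinv. destruct (Z.eqb n 0).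
  - unfold Cconj, Copp, RtoC; simpl; f_equal; ring.
  - rewrite Cmult_conj, Cconj_Cinv_dsym. ring.
Qed.

Lemma in_H3_L20_Cconj (u : Z -> C) :
  in_H3_L20 u -> in_H3_L20 (fun n => Cconj (u n)).
Proof.
  intros [Hu0 Hsum]. split.
  - rewrite Hu0. apply Cconj_RtoC.
  - eapply ex_series_ext; [| exact Hsum].
    intros n. simpl. rewrite !Cmod_conj. reflexivity.
Qed.

Lemma filterlim_Cconj (l : C) : filterlim Cconj (locally l) (locally (Cconj l)).
Proof.
  apply filterlim_locally. intros eps. exists eps.
  intros [x y] [Hx Hy]. destruct l as [a b]. split; [exact Hx |].
  unfold ball in *; simpl in *. unfold AbsRing_ball, abs, minus, plus, opp in *; simpl in *.
  replace (- y + - - b) with (- (y + - b)) by ring. rewrite Rabs_Ropp. exact Hy.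
Qed.

Lemma sum_n_Cconj (a : nat -> C) (N : nat) :
  sum_n (fun n => Cconj (a n)) N = Cconj (sum_n a N).
Proof.
  induction N as [| N IH].
  - rewrite !sum_O. reflexivity.
  - rewrite !sum_Sn, IH. now rewrite Cplus_conj.
Qed.

Lemma is_series_Cconj (a : nat -> C) (l : C) :
  is_series a l -> is_series (fun n => Cconj (a n)) (Cconj l).
Proof.
  intros H. unfold is_series.
  eapply filterlim_ext; [intros N; symmetry; apply sum_n_Cconj |].
  eapply filterlim_comp; [exact H | apply filterlim_Cconj].
Qed.

Lemma is_zseries_Cconj (f g : Z -> C) (l : C) :
  (forall m, g m = Cconj (f m)) -> is_zseries f l -> is_zseries g (Cconj l).
Proof.
  intros Hg H. eapply is_series_ext; [| apply (is_series_Cconj _ _ H)].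
  intros [| n]; unfold zsym; rewrite ?Hg; [reflexivity |].
  now rewrite Cplus_conj.
Qed.

Lemma RInt_reflect_antisym (g : R -> R) :
  (forall z, continuous g z) -> (forall y, g (2 * PI - y) = - g y) ->
  RInt g 0 (2 * PI) = 0.
Proof.
  intros Hc Hg.
  assert (Hex : forall a b, ex_RInt g a b).
  { intros a b. apply (ex_RInt_continuous (V := R_CompleteNormedModule)).
    intros z _. apply Hc. }
  pose proof (RInt_comp_lin g (-1) (2 * PI) 0 (2 * PI) (Hex _ _)) as Hsub.
  replace (-1 * 0 + 2 * PI) with (2 * PI) in Hsub by ring.
  replace (-1 * (2 * PI) + 2 * PI) with 0 in Hsub by ring.
  rewrite (RInt_ext _ g) in Hsub.
  2:{ intros y _. replace (-1 * y + 2 * PI) with (2 * PI - y) by ring.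
      rewrite Hg. unfold scal; simpl; unfold mult; simpl. ring. }
  rewrite <- (opp_RInt_swap g 0 (2 * PI) (Hex _ _)) in Hsub.
  unfold opp in Hsub; simpl in Hsub. lra.
Qed.

Lemma sin_IZR_2PI (m : Z) : sin (IZR m * (2 * PI)) = 0.
Proof. apply sin_eq_0_1. exists (2 * m)%Z. rewrite mult_IZR. ring. Qed.

Lemma cos_IZR_2PI (m : Z) : cos (IZR m * (2 * PI)) = 1.
Proof.
  replace (IZR m * (2 * PI)) with (2 * (IZR m * PI)) by ring.
  rewrite cos_2a_sin, (sin_eq_0_1 (IZR m * PI)) by (exists m; reflexivity). ring.
Qed.

Lemma sin_IZR_reflect (m : Z) (y : R) : sin (IZR m * (2 * PI - y)) = - sin (IZR m * y).
Proof.
  replace (IZR m * (2 * PI - y)) with (IZR m * (2 * PI) - IZR m * y) by ring.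
  rewrite sin_minus, sin_IZR_2PI, cos_IZR_2PI. ring.
Qed.

Lemma cos_IZR_reflect (m : Z) (y : R) : cos (IZR m * (2 * PI - y)) = cos (IZR m * y).
Proof.
  replace (IZR m * (2 * PI - y)) with (IZR m * (2 * PI) - IZR m * y) by ring.
  rewrite cos_minus, sin_IZR_2PI, cos_IZR_2PI. ring.
Qed.

Section FourierCoefficients.

Variable f : R -> R.
Hypothesis f_cont : forall z, continuous f z.
Hypothesis f_periodic : forall z, f (z + 2 * PI) = f z.

Let continuous_mul (t : R -> R) :
  (forall x, ex_derive t x) -> forall z, continuous (fun z => f z * t z) z.
Proof.
  intros Ht z. apply (continuous_mult f t z (f_cont z)).
  apply (ex_derive_continuous (K := R_AbsRing) (V := R_NormedModule)), Ht.
Qed.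

Let f_reflect (y : R) : f (2 * PI - y) = f (- y).
Proof. rewrite <- (f_periodic (- y)). f_equal. ring. Qed.

Lemma fcoef_Cconj_even (m : Z) :
  (forall z, f (- z) = f z) -> Cconj (fcoef f m) = fcoef f m.
Proof.
  intros f_even.
  assert (Hsin : RInt (fun z => f z * sin (IZR m * z)) 0 (2 * PI) = 0).
  { apply RInt_reflect_antisym.
    - apply continuous_mul. intros x. auto_derive. trivial.
    - intros y. rewrite sin_IZR_reflect, f_reflect, f_even. ring. }
  unfold fcoef, Cconj; simpl. rewrite Hsin. f_equal. ring.
Qed.

Lemma fcoef_Cconj_odd (m : Z) :
  (forall z, f (- z) = - f z) -> Cconj (fcoef f m) = Copp (fcoef f m).
Proof.
  intros f_odd.
  assert (Hcos : RInt (fun z => f z * cos (IZR m * z)) 0 (2 * PI) = 0).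
  { apply RInt_reflect_antisym.
    - apply continuous_mul. intros x. auto_derive. trivial.
    - intros y. rewrite cos_IZR_reflect, f_reflect, f_odd. ring. }
  unfold fcoef, Cconj, Copp; simpl. rewrite Hcos. f_equal; ring.
Qed.

End FourierCoefficients.

Lemma Derive_periodic (f : R -> R) (T z : R) :
  (forall x, f (x + T) = f x) -> Derive f (z + T) = Derive f z.
Proof.
  intros Hper. rewrite <- (Derive_ext _ _ z Hper).
  exact (eq_sym (Derive_n_comp_trans f 1 z T)).
Qed.

Lemma Derive_even (f : R -> R) (z : R) :
  (forall x, ex_derive f x) -> (forall x, f (- x) = f x) ->
  Derive f (- z) = - Derive f z.
Proof.
  intros Hf Heven.
  rewrite <- (Derive_ext (fun x => f (- x)) f z Heven).
  rewrite (Derive_comp f (fun x => - x) z (Hf _)) by (auto_derive; trivial).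
  rewrite Derive_opp, Derive_id. ring.
Qed.

(* The n-th Fourier coefficient of H u = mu u, with d = dsym n and DU = dinv u n. *)
Lemma symbol_equation_Cconj (r1 r2 r3 r4 r5 r6 : R) (d U V1 V2 DU V3 M : C) :
  Cconj d = Copp d ->
  Cplus (Cmult (RtoC r1) (Cmult d U))
  (Cplus (Cmult (RtoC r2) (Cmult (Cmult d (Cmult d d)) U))
  (Cplus (Cmult (RtoC r3) (Cmult d V1))
  (Cplus (Cmult (RtoC r4) (Cmult d V2))
  (Cplus (Cmult (RtoC r5) DU) (Cmult (Cmult (RtoC r6) Ci) V3))))) = Cmult M U ->
  Cplus (Cmult (RtoC r1) (Cmult d (Cconj U)))
  (Cplus (Cmult (RtoC r2) (Cmult (Cmult d (Cmult d d)) (Cconj U)))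
  (Cplus (Cmult (RtoC r3) (Cmult d (Cconj V1)))
  (Cplus (Cmult (RtoC r4) (Cmult d (Cconj V2)))
  (Cplus (Cmult (RtoC r5) (Copp (Cconj DU))) (Cmult (Cmult (RtoC r6) Ci) (Cconj V3)))))) =
  Cmult (Copp (Cconj M)) (Cconj U).
Proof.
  intros Hd H. apply (f_equal Cconj) in H.
  rewrite !Cplus_conj, !Cmult_conj, !Hd, !Cconj_RtoC, Cconj_Ci in H.
  transitivity (Copp (Cmult (Cconj M) (Cconj U))); [rewrite <- H |]; ring.
Qed.

Lemma is_eigenvalue_H_Cconj (k c rho phi gamma : R) (w : R -> R) (mu : C) :
  (forall z, ex_derive w z) -> (forall z, ex_derive (Derive w) z) ->
  (forall z, w (z + 2 * PI) = w z) -> (forall z, w (- z) = w z) ->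
  is_eigenvalue_H k c rho phi gamma w mu ->
  is_eigenvalue_H k c rho phi gamma w (Copp (Cconj mu)).
Proof.
  intros Hw Hdw Hper Heven
    [u [Hu [[n0 Hn0] [v1 [v2 [v3 [Hv1 [Hv2 [Hv3 Heq]]]]]]]]].
  assert (cont_of_derivable : forall f : R -> R, (forall z, ex_derive f z) ->
            forall z, continuous f z).
  { intros f Hf z. apply (ex_derive_continuous (K := R_AbsRing) (V := R_NormedModule)), Hf. }
  assert (Hcw : forall m, Cconj (fcoef w m) = fcoef w m).
  { intros m. apply fcoef_Cconj_even; auto. }
  assert (Hcw2 : forall m, Cconj (fcoef (fun z => w z ^ 2) m) = fcoef (fun z => w z ^ 2) m).
  { intros m. apply fcoef_Cconj_even.
    - apply cont_of_derivable. intros z. apply ex_derive_pow, Hw.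
    - intros z. simpl. now rewrite Hper.
    - intros z. simpl. now rewrite Heven. }
  assert (Hcdw : forall m, Cconj (fcoef (Derive w) m) = Copp (fcoef (Derive w) m)).
  { intros m. apply fcoef_Cconj_odd; auto.
    - intros z. apply Derive_periodic; auto.
    - intros z. apply Derive_even; auto. }
  exists (fun n => Cconj (u n)). split; [now apply in_H3_L20_Cconj |]. split.
  { exists n0. intros E. apply Hn0.
    now rewrite <- (Cconj_conj (u n0)), E, Cconj_RtoC. }
  exists (fun n => Cconj (v1 n)), (fun n => Cconj (v2 n)), (fun n => Cconj (v3 n)).
  split; [| split; [| split]]; intros n.
  - refine (is_zseries_Cconj _ _ _ _ (Hv1 n)). intros m.
    now rewrite Cmult_conj, Hcw.
  - refine (is_zseries_Cconj _ _ _ _ (Hv2 n)). intros m.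
    now rewrite Cmult_conj, Hcw2.
  - refine (is_zseries_Cconj _ _ _ _ (Hv3 n)). intros m.
    rewrite Cmult_conj, Hcdw, dinv_Cconj. ring.
  - rewrite dinv_Cconj. apply symbol_equation_Cconj, Heq. apply Cconj_dsym.
Qed.

Theorem lemma2p2 (rho phi k : R) (hk : 0 < k)
  (w : R -> R -> R) (c : R -> R) (a0 : R) (ha0 : 0 < a0)
  (hsmooth : forall a, Rabs a < a0 -> forall (n : nat) (z : R), ex_derive_n (w a) n z)
  (hper : forall a, Rabs a < a0 -> forall z, w a (z + 2 * PI) = w a z)
  (heven : forall a, Rabs a < a0 -> forall z, w a (- z) = w a z)
  (hw : exists K, forall a z, Rabs a < a0 ->
      Rabs (w a z - (a * cos z + a ^ 2 * (A0 rho k + A2 rho k * cos (2 * z))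
                     + a ^ 3 * A3 rho phi k * cos (3 * z))) <= K * Rabs a ^ 4)
  (hc : exists K, forall a, Rabs a < a0 ->
      Rabs (c a - (k ^ 2 + a ^ 2 * c2 rho phi k)) <= K * Rabs a ^ 4) :
  exists a1, 0 < a1 <= a0 /\
    forall (a gamma : R) (mu : C), Rabs a < a1 ->
      is_eigenvalue_H k (c a) rho phi gamma (w a) mu ->
      is_eigenvalue_H k (c a) rho phi gamma (w a) (Copp (Cconj mu)).
Proof.
  exists a0. split; [lra |].
  intros a gamma mu Ha.
  apply is_eigenvalue_H_Cconj.
  - exact (hsmooth a Ha 1%nat).
  - exact (hsmooth a Ha 2%nat).
  - exact (hper a Ha).
  - exact (heven a Ha).
Qed.
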